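(* Let $Z\subset\mathbb{P}^n$ be a finite set and let $k$ be its Kruskal rank. If $\ell(Z)\le 2k-1$, then $Z$ is separated by forms of degree $2$, i.e. for every $P\in Z$ there is a homogeneous form of degree $2$ vanishing at every point of $Z\setminus\{P\}$ and not vanishing at $P$. Hence $\nu_2(Z)$ is linearly independent.
   Context: All spaces are complex projective. $\ell(Z)$ is the cardinality of $Z$. A finite set is linearly independent if representative vectors of its points are linearly independent. The Kruskal rank of $Z$ is the largest integer $k$ such that every subset of $Z$ of cardinality at most $k$ is linearly independent. $\nu_2:\mathbb{P}^n\to\mathbb{P}(Sym^2(\mathbb{C}^{n+1}))$ is the Veronese map $[L]\mapsto[L^2]$, $L$ a linear form. *)

From mathcomp Require Import all_boot all_algebra.
From mathcomp Require Import Rstruct.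
From mathcomp.real_closed Require Import complex.
From mathcomp.multinomials Require Export mpoly.

Set Implicit Arguments.
Unset Strict Implicit.
Unset Printing Implicit Defensive.
Import GRing.Theory.
Local Open Scope ring_scope.

Definition CC : numClosedFieldType := complex Rdefinitions.R.

(* A finite set Z = {P_0, ..., P_(m-1)} of P^n is given by representative
   vectors v i : 'rV[CC]_(n.+1), nonzero and pairwise non-proportional
   (so the points are pairwise distinct, and ell(Z) = m). *)
Definition proj_point_set (N m : nat) (v : 'I_m -> 'rV[CC]_N) : Prop :=
  (forall i, v i != 0) /\
  (forall i j, i != j -> ~ exists a : CC, v i = a *: v j).

Definition rows_of (F : fieldType) (N m : nat) (v : 'I_m -> 'rV[F]_N)
  (S : {set 'I_m}) : 'M[F]_(#|S|, N) :=
  \matrix_(i < #|S|) v (enum_val i).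

Definition lin_indep (F : fieldType) (N m : nat) (v : 'I_m -> 'rV[F]_N)
  (S : {set 'I_m}) : bool :=
  row_free (rows_of v S).

(* Kruskal rank: the largest k such that every subset of cardinality at most k
   is linearly independent (capped at ell(Z) = m, since larger k impose no
   further condition). *)
Definition kruskal_rank (F : fieldType) (N m : nat) (v : 'I_m -> 'rV[F]_N) : nat :=
  \max_(k < m.+1 | [forall S : {set 'I_m}, (#|S| <= k)%N ==> lin_indep v S]) k.

Definition eval_at (F : fieldType) (N : nat) (p : {mpoly F[N]}) (x : 'rV[F]_N) : F :=
  p.@[fun j => x 0 j].

(* Veronese map nu_2 : [L] |-> [L^2], L^2 viewed in Sym^2(C^N) ⊂ C^N ⊗ C^N
   as the (flattened) symmetric matrix L^T L. *)
Definition veronese2 (F : fieldType) (N : nat) (x : 'rV[F]_N) : 'rV[F]_(N * N) :=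
  mxvec (x^T *m x).

Definition veronese2_set (F : fieldType) (N m : nat) (v : 'I_m -> 'rV[F]_N) :
  'I_m -> 'rV[F]_(N * N) := fun i => veronese2 (v i).

(* Since ell(Z) <= 2k - 1, every P in Z lies in two subsets Z1, Z2 of Z of
   cardinality at most k that together cover Z.  Both are linearly
   independent, so there are linear forms L1, L2 with Li vanishing on
   Zi \ {P} but not at P, and L1 L2 is a quadric separating P from the rest
   of Z.  Pairing nu_2(x) = x ⊗ x with the tensor L1 ⊗ L2 gives
   L1(x) L2(x), so these quadrics form a family dual to nu_2(Z), which is
   therefore linearly independent. *)

From mathcomp Require Import all_boot all_algebra.
From mathcomp.multinomials Require Import mpoly.
From mathcomp Require Import zify.

Set Implicit Arguments.
Unset Strict Implicit.
Unset Printing Implicit Defensive.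

Import GRing.Theory.
Local Open Scope ring_scope.

Section LinearIndependence.

Variables (F : fieldType) (N m : nat) (v : 'I_m -> 'rV[F]_N).

Definition separating_functional (S : {set 'I_m}) (P : 'I_m) (a : 'cV[F]_N) :=
  (v P *m a) 0 0 != 0 /\ forall Q, Q \in S -> Q != P -> (v Q *m a) 0 0 = 0.

Lemma lin_indep_separating (S : {set 'I_m}) (P : 'I_m) :
  lin_indep v S -> P \in S -> exists a, separating_functional S P a.
Proof.
move=> /row_freeP [B rowsB1] PS.
set iP := enum_rank_in PS P.
have dual Q : Q \in S -> (v Q *m col iP B) 0 0 = (enum_rank_in PS Q == iP)%:R.
  move=> QS; have <- : (rows_of v S *m B) (enum_rank_in PS Q) iP
                         = (enum_rank_in PS Q == iP)%:R by rewrite rowsB1 mxE.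
  by rewrite !mxE; apply: eq_bigr => l _; rewrite !mxE enum_rankK_in.
exists (col iP B); split; first by rewrite dual // eqxx oner_eq0.
move=> Q QS QP; rewrite dual //; case: eqP => // /(enum_rank_in_inj QS PS) QeP.
by rewrite QeP eqxx in QP.
Qed.

Lemma separating_lin_indep (S : {set 'I_m}) :
  (forall P, P \in S -> exists a, separating_functional S P a) -> lin_indep v S.
Proof.
move=> sepS.
have [d d_sep] := fin_all_exists (fun i : 'I_#|S| => sepS _ (enum_valP i)).
apply/row_freeP.
exists (\matrix_(l, i) (d i l 0 / (v (enum_val i) *m d i) 0 0)).
apply/matrixP => i j; rewrite !mxE.
have [dj_nz dj_vanish] := d_sep j.
transitivity ((v (enum_val i) *m d j) 0 0 / (v (enum_val j) *m d j) 0 0).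
  by rewrite mxE mulr_suml; apply: eq_bigr => l _; rewrite !mxE mulrA.
have [->|ij] := eqVneq i j; first by rewrite divff.
by rewrite dj_vanish ?mul0r ?enum_valP // (inj_eq enum_val_inj).
Qed.

Lemma kruskal_rank_lin_indep (S : {set 'I_m}) :
  (#|S| <= kruskal_rank v)%N -> lin_indep v S.
Proof.
pose indep_upto (k : 'I_m.+1) :=
  [forall T : {set 'I_m}, (#|T| <= k)%N ==> lin_indep v T].
have indep0 : indep_upto ord0.
  apply/forallP => T; apply/implyP => T0.
  by rewrite /lin_indep -row_leq_rank (leq_trans T0).
rewrite /kruskal_rank -/(indep_upto _) (bigmax_eq_arg ord0 indep0).
case: arg_maxnP => // k /forallP /(_ S) /implyP indep_k _.
exact: indep_k.
Qed.

End LinearIndependence.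

Lemma exists_subset_card (T : finType) (A : {set T}) j : (j <= #|A|)%N ->
  exists B : {set T}, B \subset A /\ #|B| = j.
Proof.
elim: j => [|j IH] jA; first by exists set0; rewrite sub0set cards0.
have [B [BA cardB]] := IH (ltnW jA).
have: ~~ (A \subset B).
  by apply/negP => /subset_leq_card; rewrite cardB; lia.
case/subsetPn => x xA xB.
exists (x |: B); rewrite cardsU1 xB cardB; split => //.
by rewrite subUset sub1set xA.
Qed.

Lemma cover_by_two_small_subsets (T : finType) k (P : T) : (#|T| < 2 * k)%N ->
  exists S1 S2 : {set T}, [/\ P \in S1, P \in S2, (#|S1| <= k)%N,
    (#|S2| <= k)%N & forall Q, Q \in S1 \/ Q \in S2].
Proof.
move=> Tk.
have cardCP : #|[set~ P]| = #|T|.-1 by rewrite cardsC1.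
have [A [AP cardA]] : exists A : {set T}, A \subset [set~ P] /\ #|A| = minn k.-1 #|T|.-1.
  by apply: exists_subset_card; rewrite cardCP geq_minr.
exists (P |: A), (P |: ([set~ P] :\: A)); split; rewrite ?setU11 //.
- by rewrite cardsU1 cardA; case: (P \in A); lia.
- by rewrite cardsU1 cardsD (setIidPr AP) cardCP cardA; case: (_ \in _); lia.
move=> Q; have [->|QP] := eqVneq Q P; first by left; rewrite setU11.
have [QA|QA] := boolP (Q \in A); first by left; rewrite setU1r.
by right; rewrite setU1r // !inE QA QP.
Qed.

Section LinearForms.

Variables (F : fieldType) (N : nat).

Definition linform (a : 'cV[F]_N) : {mpoly F[N]} := \sum_(j < N) a j 0 *: 'X_j.

Lemma linform_homog a : linform a \is 1.-homog.
Proof.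
apply: rpred_sum => j _; apply: rpredZ.
by rewrite dhomogX; apply/eqP; exact: mdeg1.
Qed.

Lemma eval_linform a x : eval_at (linform a) x = (x *m a) 0 0.
Proof.
rewrite /eval_at /linform raddf_sum mxE; apply: eq_bigr => j _.
by rewrite /= mevalZ mevalXU mulrC.
Qed.

Lemma eval_linformM a b x :
  eval_at (linform a * linform b) x = (x *m a) 0 0 * (x *m b) 0 0.
Proof. by rewrite -!eval_linform; apply: mevalM. Qed.

Lemma veronese2_dot (x : 'rV[F]_N) (a b : 'cV[F]_N) :
  (veronese2 x *m (mxvec (a *m b^T))^T) 0 0 = (x *m a) 0 0 * (x *m b) 0 0.
Proof.
by rewrite mxvec_dotmul !mulmxA -mulmxA -trmx_mul mxE big_ord1 [_^T 0 0]mxE.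
Qed.

End LinearForms.

Lemma separating_linform_pair (F : fieldType) (N m : nat) (v : 'I_m -> 'rV[F]_N)
    (P : 'I_m) : (m < 2 * kruskal_rank v)%N ->
  exists a b : 'cV[F]_N, [/\ (v P *m a) 0 0 != 0, (v P *m b) 0 0 != 0 &
    forall Q, Q != P -> (v Q *m a) 0 0 * (v Q *m b) 0 0 = 0].
Proof.
rewrite -{1}[m]card_ord => mk.
have [S1 [S2 [PS1 PS2 S1k S2k cover]]] := cover_by_two_small_subsets P mk.
have [a [aP aS1]] := lin_indep_separating (kruskal_rank_lin_indep S1k) PS1.
have [b [bP bS2]] := lin_indep_separating (kruskal_rank_lin_indep S2k) PS2.
exists a, b; split => // Q QP.
by case: (cover Q) => [/aS1 -> | /bS2 ->]; rewrite ?mul0r ?mulr0.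
Qed.

Theorem mainTheorem2 (n m : nat) (v : 'I_m -> 'rV[CC]_(n.+1)) :
  proj_point_set v ->
  (m.+1 <= 2 * kruskal_rank v)%N ->
  (forall P : 'I_m, exists q : {mpoly CC[n.+1]},
      q \is 2.-homog /\
      (forall Q : 'I_m, Q != P -> eval_at q (v Q) = 0) /\
      eval_at q (v P) != 0) /\
  lin_indep (veronese2_set v) [set: 'I_m].
Proof.
(* Distinctness of the points follows from the Kruskal rank bound anyway. *)
move=> _ mk; split.
  move=> P; have [a [b [aP bP vanish]]] := separating_linform_pair P mk.
  exists (linform a * linform b); split.
    by rewrite -[2%N]/(1 + 1)%N dhomogM ?linform_homog.
  by split=> [Q /vanish|]; rewrite eval_linformM // mulf_neq0.
apply: separating_lin_indep => P _.
have [a [b [aP bP vanish]]] := separating_linform_pair P mk.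
exists (mxvec (a *m b^T))^T.
split=> [|Q _ QP]; rewrite /veronese2_set veronese2_dot; first exact: mulf_neq0.
exact: vanish.
Qed.
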